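(* Let $k\in\mathbb{N}$, $g\in\mathbb{Z}$ with $-k<g\le k$, $b\in\mathbb{R}$, and $z\in\mathbb{C}$ with $\mathrm{Re}(z)>0$ and $\mathrm{Re}(1/z)\ge k/2$. Define \[ \mathcal{I}_{k,g,b}(z):=e^{\frac{2\pi b}{kz}}z^{\frac52}\int_{-\infty}^{\infty}e^{-\frac{2\pi u^2}{kz}}f_{k,g}(u)\,du,\qquad \mathcal{J}_{k,g,b}(z):=e^{\frac{2\pi b}{kz}}z^{\frac52}\int_{-\sqrt b}^{\sqrt b}e^{-\frac{2\pi u^2}{kz}}f_{k,g}(u)\,du\ \ (b>0), \] and $h_{g,k}:=k^2/g^2$ if $g\ne0$, $h_{g,k}:=1$ if $g=0$. Then: (1) if $b\le0$, then $|\mathcal{I}_{k,g,b}(z)|\ll |z|^{\frac52}h_{g,k}$; (2) if $b>0$, then $\mathcal{I}_{k,g,b}(z)=\mathcal{J}_{k,g,b}(z)+\mathcal{E}_{k,g,b}(z)$ where $|\mathcal{E}_{k,g,b}(z)|\ll|z|^{\frac52}h_{g,k}$; with implied constants independent of $k$, $g$ and $z$.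
   Context: For $k\in\mathbb{N}$, $g\in\mathbb{Z}$, $u\in\mathbb{R}$: $f_{k,g}(u):=\frac{\pi^2}{\sinh^2\left(\frac{\pi u}{k}-\frac{\pi i g}{2k}\right)}$ if $g\not\equiv0\pmod{2k}$, and $f_{k,g}(u):=\frac{\pi^2}{\sinh^2(\pi u/k)}-\frac{k^2}{u^2}$ if $g\equiv0\pmod{2k}$. $z^{5/2}$ denotes the principal branch. *)

From Stdlib Require Import Reals ZArith.
From Coquelicot Require Import Coquelicot.

Open Scope R_scope.

Definition Cexp (w : C) : C :=
  (exp (Re w) * cos (Im w), exp (Re w) * sin (Im w)).

Definition Csinh (w : C) : C := ((Cexp w - Cexp (- w)) / RtoC 2)%C.

(* principal argument in (-pi, pi] *)
Definition Carg (w : C) : R :=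
  let x := Re w in let y := Im w in
  if Rlt_dec 0 x then atan (y / x)
  else if Rlt_dec x 0 then
    (if Rle_dec 0 y then atan (y / x) + PI else atan (y / x) - PI)
  else if Rlt_dec 0 y then PI / 2
  else if Rlt_dec y 0 then - (PI / 2) else 0.

Definition Clog (w : C) : C := (ln (Cmod w), Carg w).
Definition Cpow52 (w : C) : C := Cexp (RtoC (5 / 2) * Clog w)%C.

Definition Ci (y : R) : C := (0, y).

Definition f_kg (k : nat) (g : Z) (u : R) : C :=
  if (g mod (2 * Z.of_nat k) =? 0)%Z then
    RtoC (PI ^ 2 / (sinh (PI * u / INR k)) ^ 2 - (INR k) ^ 2 / u ^ 2)
  else
    (RtoC (PI ^ 2) /
     (Csinh (RtoC (PI * u / INR k) - Ci (PI * IZR g / (2 * INR k))%R)) ^ 2)%C.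

Definition integrand (k : nat) (g : Z) (z : C) (u : R) : C :=
  (Cexp (- (RtoC (2 * PI * u ^ 2) / (RtoC (INR k) * z))) * f_kg k g u)%C.

Definition prefactor (k : nat) (b : R) (z : C) : C :=
  (Cexp (RtoC (2 * PI * b) / (RtoC (INR k) * z)) * Cpow52 z)%C.

Definition h_gk (g : Z) (k : nat) : R :=
  if (g =? 0)%Z then 1 else (INR k) ^ 2 / (IZR g) ^ 2.

(* Write [alpha = 2 pi Re(1/z) / k]; the hypothesis [Re(1/z) >= k/2] gives [alpha >= pi].
   The integrand has modulus [exp(-alpha u^2) |f_{k,g}(u)|], and [|f_{k,g}| <= 36 h_{g,k}]
   uniformly in [u]: for [g <> 0] because [|sinh(x - i t)|^2 = sinh^2 x + sin^2 t >= t^2 / 9]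
   with [t = pi g / (2k)], [|t| <= pi/2]; for [g = 0] because [1/sinh^2 x - 1/x^2] is bounded
   (it tends to [-1/3] at [0], which also makes the integrand Riemann integrable).
   On [u^2 >= b] one has [exp(-alpha u^2) <= exp(-(alpha-1) b) / (1 + u^2)], whose integral is
   controlled by [atan]; this yields the improper integral with [|I| <= 36 pi h] and, for [b > 0],
   tails outside [[-sqrt b, sqrt b]] of size at most [36 pi h exp(-(alpha-1) b)].  Since the
   prefactor has modulus [exp(alpha b) |z|^(5/2)], both claims hold with [C = 36 pi exp |b|]. *)

From Pilot Require Import Defs.
From Stdlib Require Import Reals ZArith Lra Lia Psatz.
From Coquelicot Require Import Coquelicot.
Open Scope R_scope.

Lemma le_of_is_derive_le (f g df dg : R -> R) (B : R) :
  (forall x, is_derive f x (df x)) -> (forall x, is_derive g x (dg x)) ->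
  f 0 <= g 0 -> (forall x, 0 <= x <= B -> df x <= dg x) ->
  forall x, 0 <= x <= B -> f x <= g x.
Proof.
  intros Hf Hg H0 Hd x Hx.
  destruct (Req_dec x 0) as [->|Hx0]; [lra|].
  destruct (MVT_gen (fun t => g t - f t) 0 x (fun t => dg t - df t)) as [c [Hc Heq]].
  - cbv zeta; intros t _. apply (is_derive_minus (V:=R_NormedModule)); auto.
  - cbv zeta; intros t _. apply continuity_pt_filterlim.
    apply (ex_derive_continuous (V:=R_NormedModule) (fun s => g s - f s)).
    exists (dg t - df t). apply (is_derive_minus (V:=R_NormedModule)); auto.
  - rewrite Rmin_left, Rmax_right in Hc by lra.
    assert (df c <= dg c) by (apply Hd; lra). nra.
Qed.

Lemma exp_le_compat x y : x <= y -> exp x <= exp y.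
Proof. intros H. destruct (Req_dec x y) as [->|]; [lra | left; apply exp_increasing; lra]. Qed.

Local Ltac solve_derive := intros; unfold sinh, cosh; auto_derive; [auto | try field; try ring].

Lemma sinh_opp x : sinh (- x) = - sinh x.
Proof. unfold sinh. rewrite Ropp_involutive. field. Qed.

Lemma cosh_sq x : cosh x ^ 2 = 1 + sinh x ^ 2.
Proof.
  unfold sinh, cosh. rewrite <- !Rsqr_pow2 at 1.
  assert (exp x * exp (- x) = 1) by (rewrite <- exp_plus, Rplus_opp_r; apply exp_0).
  unfold Rsqr. nra.
Qed.

Lemma cosh_ge_1 x : 1 <= cosh x.
Proof.
  pose proof (cosh_sq x). pose proof (pow2_ge_0 (sinh x)).
  assert (0 < cosh x) by (unfold cosh; pose proof (exp_pos x); pose proof (exp_pos (- x)); lra).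
  nra.
Qed.

Lemma sinh_ge_id x : 0 <= x -> x <= sinh x.
Proof.
  intros Hx. apply (le_of_is_derive_le (fun t => t) sinh (fun _ => 1) cosh x);
    [solve_derive | solve_derive | rewrite sinh_0; lra | intros; apply cosh_ge_1 | lra].
Qed.

Lemma sinh_neq_0 x : x <> 0 -> sinh x <> 0.
Proof.
  intros H. destruct (Rlt_or_le 0 x).
  - pose proof (sinh_ge_id x ltac:(lra)). lra.
  - pose proof (sinh_ge_id (- x) ltac:(lra)). rewrite sinh_opp in *. lra.
Qed.

Lemma cosh_ge_quadratic x : 0 <= x -> 1 + x ^ 2 / 2 <= cosh x.
Proof.
  intros Hx. apply (le_of_is_derive_le (fun t => 1 + t ^ 2 / 2) cosh (fun t => t) sinh x);
    [solve_derive | solve_derive | rewrite cosh_0; lra | intros; apply sinh_ge_id; lra | lra].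
Qed.

Lemma sinh_ge_cubic x : 0 <= x -> x + x ^ 3 / 6 <= sinh x.
Proof.
  intros Hx.
  apply (le_of_is_derive_le (fun t => t + t ^ 3 / 6) sinh (fun t => 1 + t ^ 2 / 2) cosh x);
    [solve_derive | solve_derive | rewrite sinh_0; lra | intros; apply cosh_ge_quadratic; lra | lra].
Qed.

Lemma cosh_le_2 x : 0 <= x <= 1 -> cosh x <= 2.
Proof.
  intros Hx. unfold cosh.
  assert (exp x <= exp 1) by (apply exp_le_compat; lra).
  assert (exp (- x) <= exp 0) by (apply exp_le_compat; lra).
  rewrite exp_0 in *. pose proof exp_le_3. lra.
Qed.

Lemma sinh_le_double x : 0 <= x <= 1 -> sinh x <= 2 * x.
Proof.
  apply (le_of_is_derive_le sinh (fun t => 2 * t) cosh (fun _ => 2) 1);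
    [solve_derive | solve_derive | rewrite sinh_0; lra | apply cosh_le_2].
Qed.

Lemma cosh_le_1_add_sq x : 0 <= x <= 1 -> cosh x <= 1 + x ^ 2.
Proof.
  apply (le_of_is_derive_le cosh (fun t => 1 + t ^ 2) sinh (fun t => 2 * t) 1);
    [solve_derive | solve_derive | rewrite cosh_0; lra | apply sinh_le_double].
Qed.

Lemma sinh_le_cubic x : 0 <= x <= 1 -> sinh x <= x + x ^ 3 / 3.
Proof.
  apply (le_of_is_derive_le sinh (fun t => t + t ^ 3 / 3) cosh (fun t => 1 + t ^ 2) 1);
    [solve_derive | solve_derive | rewrite sinh_0; lra | apply cosh_le_1_add_sq].
Qed.

Lemma cosh_le_quartic x : 0 <= x <= 1 -> cosh x <= 1 + x ^ 2 / 2 + x ^ 4 / 12.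
Proof.
  apply (le_of_is_derive_le cosh (fun t => 1 + t ^ 2 / 2 + t ^ 4 / 12) sinh
           (fun t => t + t ^ 3 / 3) 1);
    [solve_derive | solve_derive | rewrite cosh_0; lra | apply sinh_le_cubic].
Qed.

Lemma sinh_le_quintic x : 0 <= x <= 1 -> sinh x <= x + x ^ 3 / 6 + x ^ 5 / 60.
Proof.
  apply (le_of_is_derive_le sinh (fun t => t + t ^ 3 / 6 + t ^ 5 / 60) cosh
           (fun t => 1 + t ^ 2 / 2 + t ^ 4 / 12) 1);
    [solve_derive | solve_derive | rewrite sinh_0; lra | apply cosh_le_quartic].
Qed.

Lemma atan_le_id x : 0 <= x -> atan x <= x.
Proof.
  intros Hx. apply (le_of_is_derive_le atan id (fun t => / (1 + t ^ 2)) (fun _ => 1) x).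
  - intros t. pose proof (is_derive_atan t) as H. rewrite Rsqr_pow2 in H. exact H.
  - intros t. apply (is_derive_id (K:=R_AbsRing)).
  - unfold id; rewrite atan_0; lra.
  - intros t _. rewrite <- Rinv_1 at 2.
    apply Rinv_le_contravar; [lra|]. pose proof (pow2_ge_0 t); lra.
  - lra.
Qed.

Lemma sin_sq_ge t : Rabs t <= PI / 2 -> t ^ 2 / 9 <= sin t ^ 2.
Proof.
  enough (H : forall t, 0 <= t <= PI / 2 -> t / 3 <= sin t).
  { intros Ht. destruct (Rle_or_lt 0 t).
    - rewrite Rabs_right in Ht by lra. pose proof (H t ltac:(lra)). nra.
    - rewrite Rabs_left in Ht by lra. pose proof (H (- t) ltac:(lra)). rewrite sin_neg in *. nra. }
  intros u Hu. pose proof PI_4.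
  destruct (sin_bound u 0 ltac:(lra) ltac:(lra)) as [Hlb _].
  unfold sin_approx, sum_f_R0, sin_term in Hlb. simpl in Hlb.
  nra.
Qed.

Definition csch2_reg (x : R) : R := / sinh x ^ 2 - / x ^ 2.

Definition csch2_reg_ext (x : R) : R := if Req_EM_T x 0 then - (1 / 3) else csch2_reg x.

Lemma csch2_reg_opp x : csch2_reg (- x) = csch2_reg x.
Proof. unfold csch2_reg. rewrite sinh_opp. f_equal; f_equal; ring. Qed.

Lemma csch2_reg_near0 x : 0 < x <= 1 -> 0 <= csch2_reg x + 1 / 3 <= x ^ 2 / 3.
Proof.
  intros Hx. pose proof (sinh_ge_cubic x ltac:(lra)) as Hlo.
  pose proof (sinh_le_quintic x ltac:(lra)) as Hhi.
  set (s := sinh x) in *.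
  set (U := x + x ^ 3 / 6 + x ^ 5 / 60) in *. set (L := x + x ^ 3 / 6) in *.
  assert (HL : x <= L) by (unfold L; nra).
  assert (L ^ 2 <= s ^ 2 <= U ^ 2) by (split; apply pow_incr; lra).
  assert (Hx2 : x ^ 2 <= s ^ 2) by (apply pow_incr; lra).
  assert (Hx1 : x ^ 2 <= 1) by nra.
  set (N := 3 * x ^ 2 - (3 - x ^ 2) * s ^ 2).
  assert (Heq : csch2_reg x + 1 / 3 = N / (3 * x ^ 2 * s ^ 2)).
  { unfold csch2_reg, N. fold s. field. split; lra. }
  (* [N] is squeezed between the values it takes at [s = L] and [s = U], both of order [x^6]. *)
  assert (NU : 3 * x ^ 2 - (3 - x ^ 2) * U ^ 2
               = x ^ 6 * (3 / 20 + x ^ 2 * (2 / 45) + x ^ 4 * (1 / 180 - 1 / 1200) + x ^ 6 / 3600))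
    by (unfold U, L; field).
  assert (NL : 3 * x ^ 2 - (3 - x ^ 2) * L ^ 2 = x ^ 6 / 4 + x ^ 8 / 36) by (unfold L; field).
  assert (P0 : 0 <= x ^ 6 * (3 / 20 + x ^ 2 * (2 / 45) + x ^ 4 * (1 / 180 - 1 / 1200)
                             + x ^ 6 / 3600)).
  { apply Rmult_le_pos; [apply pow_le; lra|].
    pose proof (pow2_ge_0 x). pose proof (pow_le x 4). pose proof (pow_le x 6). nra. }
  assert (x ^ 8 <= x ^ 6).
  { pose proof (pow_le x 6 ltac:(lra)). replace (x ^ 8) with (x ^ 6 * x ^ 2) by ring. nra. }
  assert (HN : 0 <= N <= x ^ 6) by (unfold N; nra).
  assert (Hpos : 0 < x ^ 2) by (apply pow_lt; lra).
  rewrite Heq. split.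
  - apply Rdiv_le_0_compat; nra.
  - apply Rle_trans with (x ^ 6 / (3 * x ^ 2 * x ^ 2)).
    + apply Rle_trans with (x ^ 6 / (3 * x ^ 2 * s ^ 2)).
      * apply Rmult_le_compat_r; [left; apply Rinv_0_lt_compat|]; nra.
      * apply Rmult_le_compat_l; [apply pow_le; lra|]. apply Rinv_le_contravar; nra.
    + right. field. lra.
Qed.

Lemma csch2_reg_far x : 1 <= x -> - 1 <= csch2_reg x <= 0.
Proof.
  intros Hx. pose proof (sinh_ge_id x ltac:(lra)). unfold csch2_reg.
  assert (x ^ 2 <= sinh x ^ 2) by (apply pow_incr; lra).
  assert (1 <= x ^ 2) by nra.
  assert (/ sinh x ^ 2 <= / x ^ 2) by (apply Rinv_le_contravar; lra).
  assert (0 < / sinh x ^ 2) by (apply Rinv_0_lt_compat; lra).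
  assert (/ x ^ 2 <= 1) by (rewrite <- Rinv_1; apply Rinv_le_contravar; lra).
  lra.
Qed.

Lemma Rabs_csch2_reg_add_third x : x <> 0 -> Rabs x <= 1 -> Rabs (csch2_reg x + 1 / 3) <= x ^ 2 / 3.
Proof.
  intros H0 H1. apply Rabs_le_between in H1.
  destruct (Rle_or_lt 0 x).
  - pose proof (csch2_reg_near0 x ltac:(lra)). rewrite Rabs_right; lra.
  - rewrite <- csch2_reg_opp. pose proof (csch2_reg_near0 (- x) ltac:(lra)).
    rewrite Rabs_right by lra. replace (x ^ 2) with ((- x) ^ 2) by ring. lra.
Qed.

Lemma Rabs_csch2_reg_le_1 x : x <> 0 -> Rabs (csch2_reg x) <= 1.
Proof.
  intros H0. apply Rabs_le. destruct (Rle_or_lt (Rabs x) 1) as [Hx|Hx].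
  - pose proof (Rabs_csch2_reg_add_third x H0 Hx) as H.
    apply Rabs_le_between in H. apply Rabs_le_between in Hx. nra.
  - destruct (Rle_or_lt 0 x).
    + rewrite Rabs_right in Hx by lra. pose proof (csch2_reg_far x ltac:(lra)). lra.
    + rewrite Rabs_left in Hx by lra. rewrite <- csch2_reg_opp.
      pose proof (csch2_reg_far (- x) ltac:(lra)). lra.
Qed.

Lemma continuous_csch2_reg_ext x : continuous csch2_reg_ext x.
Proof.
  destruct (Req_dec x 0) as [->|Hx].
  - apply continuity_pt_filterlim. intros eps Heps.
    exists (Rmin 1 eps). split; [apply Rmin_pos; lra|].
    intros y [[_ Hy0] Hy]. simpl in *. unfold R_dist in *. rewrite Rminus_0_r in Hy.
    unfold csch2_reg_ext. destruct (Req_EM_T y 0) as [|_]; [congruence|].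
    destruct (Req_EM_T 0 0) as [_|]; [|congruence].
    assert (Hy1 : Rabs y <= 1) by (pose proof (Rmin_l 1 eps); lra).
    pose proof (Rabs_csch2_reg_add_third y (not_eq_sym Hy0) Hy1).
    assert (y ^ 2 / 3 <= Rabs y)
      by (apply Rabs_le_between in Hy1; unfold Rabs; destruct Rcase_abs; nra).
    replace (csch2_reg y - - (1 / 3)) with (csch2_reg y + 1 / 3) by ring.
    pose proof (Rmin_r 1 eps). lra.
  - apply (continuous_ext_loc _ csch2_reg).
    + apply (filter_imp (fun u => u <> 0)); [|exact (open_neq 0 x Hx)].
      intros u Hu. unfold csch2_reg_ext. destruct (Req_EM_T u 0); [contradiction | reflexivity].
    + apply (ex_derive_continuous (V:=R_NormedModule)).
      pose proof (sinh_neq_0 x Hx).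
      unfold csch2_reg, sinh in *. auto_derive. repeat split; auto; apply pow_nonzero; auto.
Qed.

Lemma Cmod_Cexp w : Cmod (Cexp w) = exp (Re w).
Proof.
  unfold Cexp, Cmod; cbn [fst snd].
  replace ((exp (Re w) * cos (Im w)) ^ 2 + (exp (Re w) * sin (Im w)) ^ 2) with (exp (Re w) ^ 2).
  - apply sqrt_pow2. left; apply exp_pos.
  - pose proof (sin2_cos2 (Im w)) as H. unfold Rsqr in H. nra.
Qed.

Lemma Re_RtoC_mult c w : Re (RtoC c * w)%C = c * Re w.
Proof. destruct w; simpl; ring. Qed.

Lemma Cmod_Cpow52 z : Cmod (Cpow52 z) = Rpower (Cmod z) (5 / 2).
Proof. unfold Cpow52, Rpower, Clog. rewrite Cmod_Cexp, Re_RtoC_mult. reflexivity. Qed.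

Lemma Csinh_pair a b : Csinh (a, b) = (sinh a * cos b, cosh a * sin b).
Proof.
  unfold Csinh, Cexp, Cdiv, Cminus, Cplus, Copp, Cinv, Cmult, RtoC; simpl.
  rewrite cos_neg, sin_neg. unfold sinh, cosh. f_equal; field.
Qed.

Lemma Cmod_Csinh_sq a b : Cmod (Csinh (a, b)) ^ 2 = sinh a ^ 2 + sin b ^ 2.
Proof.
  rewrite Csinh_pair. unfold Cmod; cbn [fst snd]. rewrite pow2_sqrt.
  - pose proof (cosh_sq a). pose proof (sin2_cos2 b). unfold Rsqr in *. nra.
  - pose proof (pow2_ge_0 (sinh a * cos b)). pose proof (pow2_ge_0 (cosh a * sin b)). lra.
Qed.

Section ComplexContinuity.

Variable x : R.

Lemma continuous_Re (f : R -> C) : continuous f x -> continuous (fun t => Re (f t)) x.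
Proof. intros H. apply (continuous_comp f fst); auto. apply continuous_fst. Qed.

Lemma continuous_Im (f : R -> C) : continuous f x -> continuous (fun t => Im (f t)) x.
Proof. intros H. apply (continuous_comp f snd); auto. apply continuous_snd. Qed.

Lemma continuous_of_Re_Im (f : R -> C) :
  continuous (fun t => Re (f t)) x -> continuous (fun t => Im (f t)) x -> continuous f x.
Proof.
  intros H1 H2. apply (continuous_ext (fun t => (Re (f t), Im (f t)))).
  { intros t. destruct (f t); reflexivity. }
  apply (continuous_comp_2 (fun t => Re (f t)) (fun t => Im (f t)) pair); auto.
  apply (continuous_ext (fun p => p)); [intros []; reflexivity | apply continuous_id].
Qed.

Lemma continuous_Rmult (f g : R -> R) :
  continuous f x -> continuous g x -> continuous (fun t => f t * g t) x.
Proof. apply (continuous_mult (K:=R_AbsRing)). Qed.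

Lemma continuous_Rplus (f g : R -> R) :
  continuous f x -> continuous g x -> continuous (fun t => f t + g t) x.
Proof. apply (continuous_plus (V:=R_NormedModule)). Qed.

Lemma continuous_Ropp (f : R -> R) : continuous f x -> continuous (fun t => - f t) x.
Proof. apply (continuous_opp (V:=R_NormedModule)). Qed.

Lemma continuous_comp_derivable (f h : R -> R) :
  (forall y, ex_derive h y) -> continuous f x -> continuous (fun t => h (f t)) x.
Proof.
  intros Hh Hf. apply (continuous_comp f h); auto.
  apply (ex_derive_continuous (V:=R_NormedModule)), Hh.
Qed.

Local Ltac real_continuity :=
  repeat match goal with
  | |- continuous (fun _ => _ * _) _ => apply continuous_Rmult
  | |- continuous (fun _ => _ + _) _ => apply continuous_Rplus
  | |- continuous (fun _ => - _) _ => apply continuous_Ropp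
  | |- continuous (fun _ => Re _) _ => apply continuous_Re
  | |- continuous (fun _ => Im _) _ => apply continuous_Im
  end; auto.

Lemma continuous_Cmult (f g : R -> C) :
  continuous f x -> continuous g x -> continuous (fun t => (f t * g t)%C) x.
Proof.
  intros Hf Hg. apply continuous_of_Re_Im.
  - apply (continuous_ext (fun t => Re (f t) * Re (g t) + - (Im (f t) * Im (g t)))).
    { intros t. destruct (f t), (g t); reflexivity. }
    real_continuity.
  - apply (continuous_ext (fun t => Re (f t) * Im (g t) + Im (f t) * Re (g t))).
    { intros t. destruct (f t), (g t); reflexivity. }
    real_continuity.
Qed.

Lemma continuous_Cplus (f g : R -> C) :
  continuous f x -> continuous g x -> continuous (fun t => (f t + g t)%C) x.
Proof.
  intros Hf Hg. apply continuous_of_Re_Im.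
  - apply (continuous_ext (fun t => Re (f t) + Re (g t))).
    { intros t. destruct (f t), (g t); reflexivity. }
    real_continuity.
  - apply (continuous_ext (fun t => Im (f t) + Im (g t))).
    { intros t. destruct (f t), (g t); reflexivity. }
    real_continuity.
Qed.

Lemma continuous_Copp (f : R -> C) : continuous f x -> continuous (fun t => (- f t)%C) x.
Proof.
  intros Hf. apply continuous_of_Re_Im.
  - apply (continuous_ext (fun t => - Re (f t))); [intros t; destruct (f t); reflexivity|].
    real_continuity.
  - apply (continuous_ext (fun t => - Im (f t))); [intros t; destruct (f t); reflexivity|].
    real_continuity.
Qed.

Lemma continuous_Cexp (f : R -> C) : continuous f x -> continuous (fun t => Cexp (f t)) x.
Proof.
  intros Hf. apply continuous_of_Re_Im; simpl; apply continuous_Rmult;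
    apply continuous_comp_derivable; try (intros; auto_derive; auto); real_continuity.
Qed.

Lemma continuous_RtoC (h : R -> R) : continuous h x -> continuous (fun t => RtoC (h t)) x.
Proof.
  intros H. apply continuous_of_Re_Im; [exact H | apply continuous_const].
Qed.

Lemma continuous_Cinv (f : R -> C) :
  f x <> 0%C -> continuous f x -> continuous (fun t => (/ f t)%C) x.
Proof.
  intros H0 Hf.
  assert (Hn : Re (f x) * Re (f x) + Im (f x) * Im (f x) <> 0).
  { intros E. apply H0. destruct (f x) as [a b]. simpl in E.
    assert (a = 0) by nra. assert (b = 0) by nra. subst; reflexivity. }
  apply continuous_of_Re_Im.
  - apply (continuous_ext (fun t => Re (f t) * / (Re (f t) * Re (f t) + Im (f t) * Im (f t)))).
    { intros t. destruct (f t) as [a b]. unfold Cinv; simpl. unfold Rdiv. f_equal; f_equal; ring. }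
    apply continuous_Rmult; [real_continuity|].
    apply (continuous_comp _ Rinv); [real_continuity|].
    apply (ex_derive_continuous (V:=R_NormedModule)). auto_derive. exact Hn.
  - apply (continuous_ext (fun t => - Im (f t) * / (Re (f t) * Re (f t) + Im (f t) * Im (f t)))).
    { intros t. destruct (f t) as [a b]. unfold Cinv; simpl. unfold Rdiv. f_equal; f_equal; ring. }
    apply continuous_Rmult; [real_continuity|].
    apply (continuous_comp _ Rinv); [real_continuity|].
    apply (ex_derive_continuous (V:=R_NormedModule)). auto_derive. exact Hn.
Qed.

End ComplexContinuity.

Lemma Zmod_double_neq0 (k : nat) (g : Z) : (1 <= k)%nat ->
  (- Z.of_nat k < g <= Z.of_nat k)%Z -> g <> 0%Z -> (g mod (2 * Z.of_nat k) =? 0)%Z = false.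
Proof.
  intros Hk Hg H0. apply Z.eqb_neq. intros Hm. apply Z.mod_divide in Hm; [|lia].
  destruct Hm as [q Hq]. destruct (Z.lt_trichotomy q 0) as [Hq0|[Hq0|Hq0]]; [nia | subst; lia | nia].
Qed.

Lemma Rabs_IZR_le (k : nat) (g : Z) : (- Z.of_nat k < g <= Z.of_nat k)%Z -> Rabs (IZR g) <= INR k.
Proof.
  intros Hg. rewrite INR_IZR_INZ. apply Rabs_le.
  rewrite <- opp_IZR. split; apply IZR_le; lia.
Qed.

Lemma Cmod_Csinh_shift_sq_ge (k : nat) (g : Z) (u : R) : (1 <= k)%nat ->
  (- Z.of_nat k < g <= Z.of_nat k)%Z ->
  (PI * IZR g / (6 * INR k)) ^ 2
    <= Cmod (Csinh (RtoC (PI * u / INR k) - Defs.Ci (PI * IZR g / (2 * INR k))) ^ 2)%C.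
Proof.
  intros Hk Hg. set (t := PI * IZR g / (2 * INR k)).
  assert (Hk1 : 1 <= INR k) by (apply (le_INR 1); lia).
  replace (PI * IZR g / (6 * INR k)) with (t / 3) by (unfold t; field; lra).
  replace (RtoC (PI * u / INR k) - Defs.Ci t)%C with (PI * u / INR k, - t)
    by (unfold Cminus, Cplus, Copp, Defs.Ci, RtoC; simpl; f_equal; ring).
  replace (Cmod (Csinh (PI * u / INR k, - t) ^ 2)) with (Cmod (Csinh (PI * u / INR k, - t)) ^ 2)
    by (simpl; rewrite !Cmod_mult, Cmod_1; ring).
  rewrite Cmod_Csinh_sq, sin_neg.
  pose proof (Rabs_IZR_le k g Hg). pose proof PI_RGT_0.
  assert (Ht : Rabs t <= PI / 2).
  { unfold t, Rdiv. rewrite !Rabs_mult, Rabs_inv, (Rabs_right PI), (Rabs_right (2 * INR k)) by lra.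
    apply Rmult_le_reg_r with (2 * INR k); [lra|].
    rewrite Rmult_assoc, Rinv_l, Rmult_1_r by lra. nra. }
  pose proof (sin_sq_ge t Ht). pose proof (pow2_ge_0 (sinh (PI * u / INR k))). nra.
Qed.

Lemma shift_sq_pos (k : nat) (g : Z) : (1 <= k)%nat -> g <> 0%Z ->
  0 < (PI * IZR g / (6 * INR k)) ^ 2.
Proof.
  intros Hk Hg. apply pow2_gt_0. assert (0 < INR k) by (apply lt_0_INR; lia).
  pose proof (not_0_IZR g Hg). pose proof PI_RGT_0.
  unfold Rdiv. apply Rmult_integral_contrapositive_currified;
    [apply Rmult_integral_contrapositive_currified; lra | apply Rinv_neq_0_compat; lra].
Qed.

Lemma Cmod_f_kg_le_nz (k : nat) (g : Z) (u : R) : (1 <= k)%nat ->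
  (- Z.of_nat k < g <= Z.of_nat k)%Z -> g <> 0%Z -> Cmod (f_kg k g u) <= 36 * h_gk g k.
Proof.
  intros Hk Hg H0. unfold f_kg, h_gk. rewrite Zmod_double_neq0 by auto.
  destruct (Z.eqb_spec g 0); [contradiction|].
  pose proof (Cmod_Csinh_shift_sq_ge k g u Hk Hg) as Hlb.
  pose proof (shift_sq_pos k g Hk H0) as Hpos.
  set (S := (Csinh _ ^ 2)%C) in *.
  assert (HS : S <> 0%C) by (intros E; rewrite E, Cmod_0 in Hlb; lra).
  assert (Hk1 : 1 <= INR k) by (apply (le_INR 1); lia).
  pose proof PI_RGT_0. pose proof (not_0_IZR g H0).
  rewrite Cmod_div, Cmod_R, Rabs_right by (auto; apply Rle_ge, pow2_ge_0).
  apply Rle_trans with (PI ^ 2 / (PI * IZR g / (6 * INR k)) ^ 2).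
  - apply Rmult_le_compat_l; [apply pow2_ge_0 | apply Rinv_le_contravar; auto].
  - right. field. lra.
Qed.

Lemma f_kg_0 (k : nat) (u : R) : (1 <= k)%nat -> u <> 0 ->
  f_kg k 0 u = RtoC (PI ^ 2 * csch2_reg_ext (PI * u / INR k)).
Proof.
  intros Hk Hu. assert (INR k <> 0) by (apply not_0_INR; lia). pose proof PI_RGT_0.
  assert (Hx : PI * u / INR k <> 0).
  { unfold Rdiv. apply Rmult_integral_contrapositive_currified;
      [apply Rmult_integral_contrapositive_currified; lra | now apply Rinv_neq_0_compat]. }
  unfold f_kg, csch2_reg_ext. rewrite Zmod_0_l. simpl.
  destruct (Req_EM_T _ 0); [contradiction|]. pose proof (sinh_neq_0 _ Hx).
  unfold csch2_reg. f_equal. field. repeat split; auto; lra.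
Qed.

(* At [u = 0] the definition only makes sense through Rocq's convention [/ 0 = 0]. *)
Lemma f_kg_0_at_0 (k : nat) : f_kg k 0 0 = RtoC 0.
Proof.
  unfold f_kg. rewrite Zmod_0_l. simpl. f_equal.
  replace (PI * 0 / INR k) with 0 by (unfold Rdiv; ring).
  rewrite sinh_0. unfold Rdiv. rewrite !Rmult_0_l, Rinv_0. ring.
Qed.

Lemma Cmod_f_kg_le (k : nat) (g : Z) (u : R) : (1 <= k)%nat ->
  (- Z.of_nat k < g <= Z.of_nat k)%Z -> Cmod (f_kg k g u) <= 36 * h_gk g k.
Proof.
  intros Hk Hg. destruct (Z.eq_dec g 0) as [->|Hg0]; [|apply Cmod_f_kg_le_nz; auto].
  unfold h_gk. simpl. pose proof PI_4. pose proof PI_RGT_0.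
  destruct (Req_dec u 0) as [->|Hu].
  - rewrite f_kg_0_at_0, Cmod_R, Rabs_R0. lra.
  - rewrite f_kg_0, Cmod_R, Rabs_mult, (Rabs_right (PI ^ 2)) by (auto; apply Rle_ge, pow2_ge_0).
    assert (Rabs (csch2_reg_ext (PI * u / INR k)) <= 1).
    { unfold csch2_reg_ext. destruct (Req_EM_T _ 0) as [|Hx].
      - rewrite Rabs_Ropp, Rabs_right; lra.
      - apply Rabs_csch2_reg_le_1, Hx. }
    assert (PI ^ 2 <= 16) by nra.
    pose proof (Rabs_pos (csch2_reg_ext (PI * u / INR k))). nra.
Qed.

Lemma RtoC_div_mult (a c : R) (z : C) : c <> 0 -> z <> 0%C ->
  (RtoC a / (RtoC c * z) = RtoC (a / c) * / z)%C.
Proof.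
  intros Hc Hz. rewrite RtoC_div by auto. field.
  split; [exact Hz | intros E; apply Hc; now apply RtoC_inj].
Qed.

Definition decay_rate (k : nat) (z : C) : R := 2 * PI * Re (/ z) / INR k.

Lemma decay_rate_ge_PI (k : nat) (z : C) : (1 <= k)%nat -> INR k / 2 <= Re (/ z)%C ->
  PI <= decay_rate k z.
Proof.
  intros Hk Hz. assert (Hk1 : 1 <= INR k) by (apply (le_INR 1); lia). pose proof PI_RGT_0.
  unfold decay_rate. apply Rmult_le_reg_r with (INR k); [lra|].
  unfold Rdiv. rewrite Rmult_assoc, Rinv_l, Rmult_1_r by lra. nra.
Qed.

Lemma Cmod_integrand (k : nat) (g : Z) (z : C) (u : R) : (1 <= k)%nat -> z <> 0%C ->
  Cmod (integrand k g z u) = exp (- (decay_rate k z * u ^ 2)) * Cmod (f_kg k g u).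
Proof.
  intros Hk Hz. assert (INR k <> 0) by (apply not_0_INR; lia).
  unfold integrand, decay_rate. rewrite Cmod_mult, Cmod_Cexp, RtoC_div_mult by auto.
  do 3 f_equal. destruct (/ z)%C. simpl. field. auto.
Qed.

Lemma Cmod_prefactor (k : nat) (b : R) (z : C) : (1 <= k)%nat -> z <> 0%C ->
  Cmod (prefactor k b z) = exp (decay_rate k z * b) * Rpower (Cmod z) (5 / 2).
Proof.
  intros Hk Hz. assert (INR k <> 0) by (apply not_0_INR; lia).
  unfold prefactor, decay_rate. rewrite Cmod_mult, Cmod_Cexp, Cmod_Cpow52, RtoC_div_mult by auto.
  do 2 f_equal. rewrite Re_RtoC_mult. field. auto.
Qed.

Lemma ex_RInt_of_continuous_off_0 (F G : R -> C) :
  (forall u, continuous G u) -> (forall u, u <> 0 -> F u = G u) -> forall a b, ex_RInt F a b.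
Proof.
  intros HG HFG a b.
  assert (Hpiece : forall x y, (x = 0 \/ y = 0) -> ex_RInt F x y).
  { intros x y Hxy. apply (ex_RInt_ext G F).
    - intros t Ht. symmetry. apply HFG. revert Ht. unfold Rmin, Rmax. destruct Rle_dec; lra.
    - apply (ex_RInt_continuous (V:=C_R_CompleteNormedModule)). intros; apply HG. }
  apply (ex_RInt_Chasles F a 0 b); apply Hpiece; auto.
Qed.

Definition gaussian_factor (k : nat) (z : C) (t : R) : C :=
  Cexp (- (RtoC (2 * PI * t ^ 2) / (RtoC (INR k) * z)))%C.

Local Ltac complex_continuity :=
  repeat match goal with
  | |- continuous (fun _ => Cmult _ _) _ => apply continuous_Cmult
  | |- continuous (fun _ => Cplus _ _) _ => apply continuous_Cplus
  | |- continuous (fun _ => Cminus _ _) _ => apply continuous_Cplus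
  | |- continuous (fun _ => Cdiv _ _) _ => apply continuous_Cmult
  | |- continuous (fun _ => Copp _) _ => apply continuous_Copp
  | |- continuous (fun _ => Cexp _) _ => apply continuous_Cexp
  | |- continuous (fun _ => Csinh _) _ => unfold Csinh
  | |- continuous (fun _ => Cpow _ _) _ => cbn [Cpow]
  | |- continuous (fun _ => RtoC _) _ => apply continuous_RtoC
  | |- continuous (fun _ => ?c) _ => apply continuous_const
  end.

Lemma continuous_gaussian_factor (k : nat) (z : C) (u : R) : continuous (gaussian_factor k z) u.
Proof.
  unfold gaussian_factor. complex_continuity.
  apply (ex_derive_continuous (V:=R_NormedModule)). auto_derive. auto.
Qed.

Lemma ex_RInt_integrand (k : nat) (g : Z) (z : C) : (1 <= k)%nat ->
  (- Z.of_nat k < g <= Z.of_nat k)%Z -> forall a b, ex_RInt (integrand k g z) a b.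
Proof.
  intros Hk Hg. destruct (Z.eq_dec g 0) as [->|Hg0].
  - apply (ex_RInt_of_continuous_off_0 _
      (fun t => gaussian_factor k z t * RtoC (PI ^ 2 * csch2_reg_ext (PI * t / INR k)))%C).
    + intros u. apply continuous_Cmult; [apply continuous_gaussian_factor|].
      apply continuous_RtoC, continuous_Rmult; [apply continuous_const|].
      apply (continuous_comp (fun t => PI * t / INR k) csch2_reg_ext);
        [|apply continuous_csch2_reg_ext].
      apply (ex_derive_continuous (V:=R_NormedModule)). auto_derive. auto.
    + intros u Hu. unfold integrand. rewrite f_kg_0; auto.
  - apply (ex_RInt_of_continuous_off_0 _ (integrand k g z)); [|reflexivity].
    intros u. change (integrand k g z) with (fun t => gaussian_factor k z t * f_kg k g t)%C.
    unfold f_kg. rewrite Zmod_double_neq0 by auto.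
    apply continuous_Cmult; [apply continuous_gaussian_factor|].
    apply continuous_Cmult; [apply continuous_const|].
    apply continuous_Cinv.
    + pose proof (Cmod_Csinh_shift_sq_ge k g u Hk Hg) as Hlb.
      pose proof (shift_sq_pos k g Hk Hg0).
      intros E. rewrite E, Cmod_0 in Hlb. lra.
    + complex_continuity; apply (ex_derive_continuous (V:=R_NormedModule)); auto_derive; auto.
Qed.

Lemma atan_tail_le N a : 0 < N -> N <= a -> PI / 2 - atan a <= / N.
Proof.
  intros HN Ha. rewrite <- atan_inv by lra.
  apply Rle_trans with (atan (/ N)).
  - destruct (Req_dec N a) as [->|]; [lra|]. left; apply atan_increasing, Rinv_lt_contravar; nra.
  - apply atan_le_id. left; apply Rinv_0_lt_compat; lra.
Qed.

Lemma Rabs_atan_sub_le N a a' : 0 < N -> N < a -> N < a' -> Rabs (atan a' - atan a) <= / N.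
Proof.
  intros HN Ha Ha'.
  pose proof (atan_tail_le N a HN ltac:(lra)). pose proof (atan_tail_le N a' HN ltac:(lra)).
  pose proof (atan_bound a). pose proof (atan_bound a'). apply Rabs_le. lra.
Qed.

Lemma is_RInt_lorentzian (K x y : R) : is_RInt (fun u => K / (1 + u ^ 2)) x y (K * (atan y - atan x)).
Proof.
  replace (K * (atan y - atan x)) with (minus (K * atan y) (K * atan x))
    by (unfold minus, plus, opp; simpl; ring).
  apply (is_RInt_derive (fun u => K * atan u)).
  - intros t _. auto_derive; auto. unfold Rsqr. field. nra.
  - intros t _. apply (ex_derive_continuous (V:=R_NormedModule)). auto_derive. nra.
Qed.

Lemma minus_plus_middle {G : AbelianGroup} (u w v : G) : minus (plus u (plus w v)) w = plus u v.
Proof.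
  unfold minus. rewrite (plus_comm w v), plus_assoc, <- plus_assoc.
  transitivity (plus (plus u v) zero); [f_equal; apply plus_opp_r | apply plus_zero_r].
Qed.

Lemma exp_gauss_le_lorentzian (al b u : R) : 1 <= al -> b <= u ^ 2 ->
  exp (- (al * u ^ 2)) <= exp (- ((al - 1) * b)) / (1 + u ^ 2).
Proof.
  intros Hal Hb. pose proof (pow2_ge_0 u).
  replace (- (al * u ^ 2)) with (- ((al - 1) * u ^ 2) + - u ^ 2) by ring.
  rewrite exp_plus. unfold Rdiv. apply Rmult_le_compat.
  - left; apply exp_pos.
  - left; apply exp_pos.
  - apply exp_le_compat. nra.
  - rewrite exp_Ropp. apply Rinv_le_contravar; [lra|]. pose proof (exp_ineq1_le (u ^ 2)). lra.
Qed.

Section ImproperIntegral.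

Context {V : CompleteNormedModule R_AbsRing}.

Lemma norm_RInt_le_atan (F : R -> V) (x y K : R) : ex_RInt F x y ->
  (forall u, Rmin x y <= u <= Rmax x y -> norm (F u) <= K / (1 + u ^ 2)) ->
  norm (RInt F x y) <= K * Rabs (atan y - atan x).
Proof.
  assert (Hord : forall x y, x <= y -> ex_RInt F x y ->
            (forall u, x <= u <= y -> norm (F u) <= K / (1 + u ^ 2)) ->
            norm (RInt F x y) <= K * Rabs (atan y - atan x)).
  { intros a b Hab HF Hb. rewrite Rabs_right.
    - apply (norm_RInt_le F (fun u => K / (1 + u ^ 2)) a b); auto.
      + apply RInt_correct; auto.
      + apply is_RInt_lorentzian.
    - destruct (Req_dec a b) as [->|]; [lra|]. left. apply Rgt_minus, atan_increasing. lra. }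
  intros HF Hb. destruct (Rle_or_lt x y).
  - rewrite Rmin_left, Rmax_right in Hb by lra. apply Hord; auto.
  - rewrite Rmin_right, Rmax_left in Hb by lra.
    rewrite <- opp_RInt_swap by now apply ex_RInt_swap. rewrite (norm_opp (V:=V)).
    rewrite <- Rabs_Ropp. replace (- (atan y - atan x)) with (atan x - atan y) by ring.
    apply Hord; [lra | now apply ex_RInt_swap | auto].
Qed.

Lemma norm_le_of_lim {T : Type} (FF : (T -> Prop) -> Prop) (HF : ProperFilter FF)
  (h : T -> V) (y : V) (B : R) :
  filterlim h FF (locally y) -> FF (fun t => norm (h t) <= B) -> norm y <= B.
Proof.
  intros Hl Hb. apply (closed_filterlim_loc h (fun w : V => norm w <= B) y Hl Hb).
  apply (closed_comp (fun w : V => norm w) (fun r => r <= B)); [|apply closed_le].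
  intros w. apply (filterlim_norm (V:=V)).
Qed.

Lemma norm_sub_le_of_lim {T : Type} (FF : (T -> Prop) -> Prop) (HF : ProperFilter FF)
  (h : T -> V) (y c : V) (B : R) :
  filterlim h FF (locally y) -> FF (fun t => norm (minus (h t) c) <= B) -> norm (minus y c) <= B.
Proof.
  intros Hl. apply (norm_le_of_lim FF HF (fun t => minus (h t) c)).
  apply (filterlim_comp _ _ _ h (fun w : V => minus w c) _ (locally y)); auto.
  apply (continuous_minus (fun w : V => w) (fun _ => c));
    [apply continuous_id | apply continuous_const].
Qed.

Lemma RInt_lim_of_lorentzian_bound (F : R -> V) (K : R) : 0 <= K ->
  (forall a b, ex_RInt F a b) -> (forall u, norm (F u) <= K / (1 + u ^ 2)) ->
  exists I, filterlim (fun ab => RInt F (fst ab) (snd ab))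
              (filter_prod (Rbar_locally m_infty) (Rbar_locally p_infty)) (locally I).
Proof.
  intros HK Hex Hb.
  apply (filterlim_locally_cauchy (F := filter_prod (Rbar_locally m_infty) (Rbar_locally p_infty))).
  intros eps. set (N := (2 * K + 1) / eps).
  assert (HN : 0 < N) by (apply Rdiv_lt_0_compat; [lra | apply cond_pos]).
  exists (fun ab => fst ab < - N /\ N < snd ab). split.
  { apply (Filter_prod _ _ _ (fun a => a < - N) (fun b => N < b));
      [exists (- N) | exists N | ]; auto. }
  intros [a b] [a' b'] [Ha Hb'] [Ha' Hb'']; simpl in *.
  apply (norm_compat1 (V:=V)).
  rewrite <- (RInt_Chasles F a' a b'), <- (RInt_Chasles F a b b') by auto.
  rewrite (minus_plus_middle (G:=V)).
  eapply Rle_lt_trans; [apply (norm_triangle (V:=V))|].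
  assert (Hl : norm (RInt F a' a) <= K * / N).
  { eapply Rle_trans; [apply norm_RInt_le_atan; auto|]. apply Rmult_le_compat_l; auto.
    replace (atan a - atan a') with (atan (- a') - atan (- a)) by (rewrite !atan_opp; ring).
    apply Rabs_atan_sub_le; lra. }
  assert (Hr : norm (RInt F b b') <= K * / N).
  { eapply Rle_trans; [apply norm_RInt_le_atan; auto|]. apply Rmult_le_compat_l; auto.
    apply Rabs_atan_sub_le; lra. }
  assert (K * / N * 2 < eps).
  { pose proof (cond_pos eps).
    replace (K * / N * 2) with (eps * (2 * K) / (2 * K + 1)) by (unfold N; field; split; lra).
    apply Rmult_lt_reg_r with (2 * K + 1); [lra|].
    unfold Rdiv. rewrite Rmult_assoc, Rinv_l, Rmult_1_r by lra. nra. }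
  lra.
Qed.

Lemma is_RInt_gen_of_RInt_lim (F : R -> V) (I : V) : (forall a b, ex_RInt F a b) ->
  filterlim (fun ab => RInt F (fst ab) (snd ab))
    (filter_prod (Rbar_locally m_infty) (Rbar_locally p_infty)) (locally I) ->
  is_RInt_gen F (Rbar_locally m_infty) (Rbar_locally p_infty) I.
Proof.
  intros Hex HI P HP. unfold filtermapi.
  apply (filter_imp (fun ab => P (RInt F (fst ab) (snd ab)))); [|exact (HI P HP)].
  intros [a b] HPab. exists (RInt F a b). split; [apply RInt_correct, Hex | exact HPab].
Qed.

Lemma norm_sub_RInt_le_of_tail_bound (F : R -> V) (I : V) (s K : R) : 0 < s -> 0 <= K ->
  (forall a b, ex_RInt F a b) ->
  filterlim (fun ab => RInt F (fst ab) (snd ab))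
    (filter_prod (Rbar_locally m_infty) (Rbar_locally p_infty)) (locally I) ->
  (forall u, s * s <= u ^ 2 -> norm (F u) <= K / (1 + u ^ 2)) ->
  norm (minus I (RInt F (- s) s)) <= K * PI.
Proof.
  intros Hs HK Hex HI Htail.
  assert (HFF : ProperFilter (filter_prod (Rbar_locally m_infty) (Rbar_locally p_infty)))
    by (apply filter_prod_proper; apply Rbar_locally_filter).
  apply (norm_sub_le_of_lim _ HFF _ I _ (K * PI) HI).
  apply (Filter_prod _ _ _ (fun a => a < - s) (fun c => s < c)); [exists (- s) | exists s | ]; auto.
  intros a c Ha Hc; simpl.
  rewrite <- (RInt_Chasles F a (- s) c), <- (RInt_Chasles F (- s) s c) by auto.
  rewrite (minus_plus_middle (G:=V)).
  eapply Rle_trans; [apply (norm_triangle (V:=V))|].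
  assert (Hl : norm (RInt F a (- s)) <= K * (atan (- s) - atan a)).
  { rewrite <- (Rabs_right (atan (- s) - atan a))
      by (apply Rle_ge, Rlt_le, Rgt_minus, atan_increasing; lra).
    apply norm_RInt_le_atan; auto. intros u Hu. apply Htail.
    rewrite Rmin_left, Rmax_right in Hu by lra. nra. }
  assert (Hr : norm (RInt F s c) <= K * (atan c - atan s)).
  { rewrite <- (Rabs_right (atan c - atan s))
      by (apply Rle_ge, Rlt_le, Rgt_minus, atan_increasing; lra).
    apply norm_RInt_le_atan; auto. intros u Hu. apply Htail.
    rewrite Rmin_left, Rmax_right in Hu by lra. nra. }
  assert (atan 0 < atan s) by (apply atan_increasing; lra).
  rewrite atan_opp, atan_0 in *. pose proof (atan_bound a). pose proof (atan_bound c). nra.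
Qed.

Lemma gaussian_dominated_integral (F : R -> V) (M al : R) : 0 <= M -> 1 <= al ->
  (forall a b, ex_RInt F a b) -> (forall u, norm (F u) <= M * exp (- (al * u ^ 2))) ->
  exists I, is_RInt_gen F (Rbar_locally m_infty) (Rbar_locally p_infty) I /\
    norm I <= M * PI /\
    forall b, 0 < b -> norm (minus I (RInt F (- sqrt b) (sqrt b))) <= M * PI * exp (- ((al - 1) * b)).
Proof.
  intros HM Hal Hex HF.
  assert (Htail : forall b u, b <= u ^ 2 -> norm (F u) <= M * exp (- ((al - 1) * b)) / (1 + u ^ 2)).
  { intros b u Hb. eapply Rle_trans; [apply HF|]. unfold Rdiv. rewrite Rmult_assoc.
    apply Rmult_le_compat_l; auto. apply exp_gauss_le_lorentzian; auto. }
  assert (Hdom : forall u, norm (F u) <= M / (1 + u ^ 2)).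
  { intros u. pose proof (Htail 0 u (pow2_ge_0 u)) as H.
    rewrite Rmult_0_r, Ropp_0, exp_0, Rmult_1_r in H. exact H. }
  destruct (RInt_lim_of_lorentzian_bound F M HM Hex Hdom) as [I HI].
  assert (HFF : ProperFilter (filter_prod (Rbar_locally m_infty) (Rbar_locally p_infty)))
    by (apply filter_prod_proper; apply Rbar_locally_filter).
  exists I. split; [|split].
  - apply is_RInt_gen_of_RInt_lim; auto.
  - apply (norm_le_of_lim _ HFF _ I (M * PI) HI).
    apply filter_forall. intros [a b]; simpl.
    eapply Rle_trans; [apply norm_RInt_le_atan; auto|].
    apply Rmult_le_compat_l; auto.
    pose proof (atan_bound a); pose proof (atan_bound b). apply Rabs_le. lra.
  - intros b Hb. pose proof (sqrt_lt_R0 b Hb).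
    rewrite (Rmult_comm M PI), Rmult_assoc, Rmult_comm.
    apply norm_sub_RInt_le_of_tail_bound; auto.
    + pose proof (exp_pos (- ((al - 1) * b))). nra.
    + intros u Hu. apply Htail. rewrite sqrt_sqrt in Hu; lra.
Qed.

End ImproperIntegral.

Lemma norm_C (w : C) : @norm R_AbsRing C_R_CompleteNormedModule w = Cmod w.
Proof. symmetry. apply Cmod_norm. Qed.

Lemma h_gk_nonneg (g : Z) (k : nat) : 0 <= h_gk g k.
Proof.
  unfold h_gk. destruct (Z.eqb_spec g 0); [lra|].
  apply Rdiv_le_0_compat; [apply pow2_ge_0 | apply pow2_gt_0, not_0_IZR; auto].
Qed.

Lemma integrand_integral_bounds (k : nat) (g : Z) (z : C) : (1 <= k)%nat ->
  (- Z.of_nat k < g <= Z.of_nat k)%Z -> z <> 0%C -> 1 <= decay_rate k z ->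
  exists I, is_RInt_gen (integrand k g z) (Rbar_locally m_infty) (Rbar_locally p_infty) I /\
    Cmod I <= 36 * h_gk g k * PI /\
    forall b, 0 < b ->
      Cmod (I - RInt (V:=C_R_CompleteNormedModule) (integrand k g z) (- sqrt b) (sqrt b))%C
        <= 36 * h_gk g k * PI * exp (- ((decay_rate k z - 1) * b)).
Proof.
  intros Hk Hg Hz Hal.
  assert (HM : 0 <= 36 * h_gk g k) by (pose proof (h_gk_nonneg g k); lra).
  destruct (gaussian_dominated_integral (V:=C_R_CompleteNormedModule) (integrand k g z)
              (36 * h_gk g k) (decay_rate k z) HM Hal (ex_RInt_integrand k g z Hk Hg))
    as [I [HI [HIb Htail]]].
  - intros u. rewrite norm_C, Cmod_integrand, Rmult_comm by auto.
    apply Rmult_le_compat_r; [left; apply exp_pos | apply Cmod_f_kg_le; auto].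
  - exists I. rewrite norm_C in HIb. split; [exact HI | split; [exact HIb|]].
    intros b Hb. rewrite <- norm_C. exact (Htail b Hb).
Qed.

Lemma Cmod_prefactor_mul (k : nat) (b : R) (z w : C) : (1 <= k)%nat -> z <> 0%C ->
  Cmod (prefactor k b z * w) = Rpower (Cmod z) (5 / 2) * (exp (decay_rate k z * b) * Cmod w).
Proof. intros Hk Hz. rewrite Cmod_mult, Cmod_prefactor by auto. ring. Qed.

Theorem lemma3p2 (b : R) :
  exists Cst : R, 0 < Cst /\
  forall (k : nat) (g : Z) (z : C),
    (1 <= k)%nat ->
    (- Z.of_nat k < g <= Z.of_nat k)%Z ->
    0 < Re z ->
    INR k / 2 <= Re (/ z)%C ->
    (b <= 0 ->
       exists I : C,
         is_RInt_gen (integrand k g z) (Rbar_locally m_infty) (Rbar_locally p_infty) I /\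
         Cmod (prefactor k b z * I)%C <= Cst * Rpower (Cmod z) (5 / 2) * h_gk g k) /\
    (0 < b ->
       exists I J : C,
         is_RInt_gen (integrand k g z) (Rbar_locally m_infty) (Rbar_locally p_infty) I /\
         is_RInt (integrand k g z) (- sqrt b) (sqrt b) J /\
         Cmod (prefactor k b z * I - prefactor k b z * J)%C
           <= Cst * Rpower (Cmod z) (5 / 2) * h_gk g k).
Proof.
  pose proof PI_RGT_0.
  exists (36 * PI * exp (Rabs b)). split; [pose proof (exp_pos (Rabs b)); nra|].
  intros k g z Hk Hg Hz Hr.
  assert (Hz0 : z <> 0%C) by (intros ->; simpl in Hz; lra).
  assert (Hal : 1 <= decay_rate k z)
    by (pose proof (decay_rate_ge_PI k z Hk Hr); pose proof PI2_1; lra).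
  destruct (integrand_integral_bounds k g z Hk Hg Hz0 Hal) as [I [HI [HIb Htail]]].
  pose proof (h_gk_nonneg g k). pose proof (exp_pos (decay_rate k z * b)).
  assert (HRz : 0 < Rpower (Cmod z) (5 / 2)) by apply exp_pos.
  replace (36 * PI * exp (Rabs b) * Rpower (Cmod z) (5 / 2) * h_gk g k)
    with (Rpower (Cmod z) (5 / 2) * (36 * PI * exp (Rabs b) * h_gk g k)) by ring.
  split.
  - intros Hb. exists I. split; [exact HI|]. rewrite Cmod_prefactor_mul by auto.
    apply Rmult_le_compat_l; [lra|].
    assert (exp (decay_rate k z * b) <= 1) by (rewrite <- exp_0; apply exp_le_compat; nra).
    assert (1 <= exp (Rabs b)) by (rewrite <- exp_0; apply exp_le_compat, Rabs_pos).
    pose proof (Cmod_ge_0 I). nra.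
  - intros Hb. set (J := RInt (V:=C_R_CompleteNormedModule) (integrand k g z) (- sqrt b) (sqrt b)).
    exists I, J. split; [exact HI|].
    split; [apply (RInt_correct (V:=C_R_CompleteNormedModule)), ex_RInt_integrand; auto|].
    replace (prefactor k b z * I - prefactor k b z * J)%C with (prefactor k b z * (I - J))%C
      by ring.
    rewrite Cmod_prefactor_mul, Rabs_right by (auto; lra).
    apply Rmult_le_compat_l; [lra|].
    eapply Rle_trans; [apply Rmult_le_compat_l; [lra | exact (Htail b Hb)]|].
    assert (E : exp (decay_rate k z * b) * exp (- ((decay_rate k z - 1) * b)) = exp b)
      by (rewrite <- exp_plus; f_equal; ring).
    right. rewrite <- E. ring.
Qed.
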